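(* Let $X$ be a topological space possessing an infinite metrizable gauge, and let $\kappa$ be a regular cardinal with $\kappa\in\mathrm{MG}(X)$. Then the following are equivalent: (1) $X$ is finally $\kappa$-compact; (2) there exists $G\in\mathcal{G}_\kappa$ such that $(X,d)$ is complete for all $d\in\mathrm{Met}(X;G)$; (3) for all $G\in\mathcal{G}_\kappa$ and all $d\in\mathrm{Met}(X;G)$, $(X,d)$ is complete; (4) there exists $S\in\mathcal{F}_\kappa$ such that $(X,d)$ is complete for all $d\in\mathrm{Ult}(X;S)$; (5) for all $S\in\mathcal{F}_\kappa$ and all $d\in\mathrm{Ult}(X;S)$, $(X,d)$ is complete.
   Context: A linearly ordered Abelian group is an Abelian group $G$ with a linear order compatible with addition; $G_{>0}$, $G_{\ge0}$ as usual. For $x,y\in G_{>0}$, $x\asymp y$ iff $y\le nx$ and $x\le my$ for some $n,m\in\mathbb{Z}_{\ge1}$; $\mathrm{Arc}(G)=G_{>0}/\asymp$, ordered by $[x]\preceq[y]$ iff ($nx<y$ for all $n\ge 1$) or $x\asymp y$. $L^{\perp}$ is a linearly ordered set $L$ with a new least element adjoined. A bottomed linearly ordered set $S$ has a least element $\perp_S$; $S^*=S\setminus\{\perp_S\}$. The character $\chi(S)$ is the least cardinal $\kappa>0$ such that some strictly decreasing family $(s_\alpha)_{\alpha<\kappa}$ in $S^*$ has every $t\in S^*$ bounded below by some $s_\alpha$. A $G$-metric on a set $X$: $d\colon X\times X\to G$, $d(x,y)=0\iff x=y$, $d\ge0$, symmetric, triangle inequality. An $S$-ultrametric: $d\colon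 X\times X\to S$, $d(x,y)=\perp_S\iff x=y$, symmetric, $d(x,y)\le\max\{d(x,z),d(z,y)\}$. Topologies are generated by open balls of radius $\epsilon\in G_{>0}$ (resp. $\epsilon\in S^*$); $\mathrm{Met}(X;G)$ (resp. $\mathrm{Ult}(X;S)$) denotes those generating the given topology of $X$. $\kappa$ is a metrizable gauge of $X$ if some $G$ with $\chi(\mathrm{Arc}(G)^\perp)=\kappa$ has $\mathrm{Met}(X;G)\ne\emptyset$; $\mathrm{MG}(X)$ is the class of these; ''possesses an infinite metrizable gauge'' means some $\kappa\in\mathrm{MG}(X)$ is $\ge\omega_0$. $\mathcal{G}_\kappa$: linearly ordered Abelian groups $G$ with $\chi(\mathrm{Arc}(G)^\perp)=\kappa$; $\mathcal{F}_\kappa$: bottomed linearly ordered sets $S$ with $\chi(S)=\kappa$. A filter $\mathcal F$ is Cauchy for $d$ if for every $\epsilon\in G_{>0}$ (resp. $S^*$) some $F\in\mathcal F$ has $d(x,y)<\epsilon$ for all $x,y\in F$; $(X,d)$ is complete if every Cauchy filter converges. $X$ is finally $\kappa$-compact if every open cover has a subcover of cardinality $<\kappa$. *)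

From HB Require Import structures.
From mathcomp Require Import all_boot all_order.
From mathcomp Require Import all_classical topology.

Set Implicit Arguments.
Unset Strict Implicit.
Unset Printing Implicit Defensive.

Local Open Scope classical_set_scope.

Definition card_le (A B : Type) : Prop :=
  exists f : A -> B, forall x y, f x = f y -> x = y.

Definition card_lt (A B : Type) : Prop := card_le A B /\ ~ card_le B A.

Definition finite_type (A : Type) : Prop :=
  exists (n : nat) (f : A -> nat),
    (forall x y, f x = f y -> x = y) /\ (forall x, (f x < n)%N).

(* A cardinal, represented (von Neumann style) by an initial ordinal:
   a strict well-order all of whose proper initial segments have
   strictly smaller cardinality. *)
Record cardinal := Cardinal {
  ord_car :> Type;
  ord_lt : ord_car -> ord_car -> Prop;
  ord_wf : well_founded ord_lt;
  ord_trans : forall a b c, ord_lt a b -> ord_lt b c -> ord_lt a c;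
  ord_total : forall a b, ord_lt a b \/ a = b \/ ord_lt b a;
  ord_initial : forall a, card_lt {b : ord_car | ord_lt b a} ord_car
}.

Definition infinite_card (K : cardinal) : Prop := ~ finite_type K.

Definition regular_card (K : cardinal) : Prop :=
  infinite_card K /\
  forall A : K -> Prop,
    (forall a : K, exists b, A b /\ (ord_lt a b \/ a = b)) ->
    card_le K {b : K | A b}.

Definition coinitial_decr_family (S : Type) (lt : S -> S -> Prop) (bot : S)
    (L : cardinal) (s : L -> S) : Prop :=
  (forall a, s a <> bot) /\
  (forall a b : L, ord_lt a b -> lt (s b) (s a)) /\
  (forall t, t <> bot -> exists a, lt (s a) t \/ s a = t).

Definition has_character (S : Type) (lt : S -> S -> Prop) (bot : S)
    (K : cardinal) : Prop :=
  inhabited K /\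
  (exists s : K -> S, coinitial_decr_family lt bot s) /\
  (forall L : cardinal, inhabited L -> card_lt L K ->
     ~ exists s : L -> S, coinitial_decr_family lt bot s).

Record bls := BLS {
  bs_car :> Type;
  bs_lt : bs_car -> bs_car -> Prop;
  bs_bot : bs_car;
  bs_irr : forall a, ~ bs_lt a a;
  bs_trans : forall a b c, bs_lt a b -> bs_lt b c -> bs_lt a c;
  bs_total : forall a b, bs_lt a b \/ a = b \/ bs_lt b a;
  bs_least : forall a, bs_lt (bs_bot) a \/ bs_bot = a
}.

Definition bs_le (S : bls) (a b : S) : Prop := bs_lt a b \/ a = b.

Record loag := LOAG {
  lg_car :> Type;
  lg_zero : lg_car;
  lg_add : lg_car -> lg_car -> lg_car;
  lg_opp : lg_car -> lg_car;
  lg_lt : lg_car -> lg_car -> Prop;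
  lg_addA : forall x y z, lg_add x (lg_add y z) = lg_add (lg_add x y) z;
  lg_addC : forall x y, lg_add x y = lg_add y x;
  lg_add0 : forall x, lg_add lg_zero x = x;
  lg_addN : forall x, lg_add (lg_opp x) x = lg_zero;
  lg_irr : forall a, ~ lg_lt a a;
  lg_trans : forall a b c, lg_lt a b -> lg_lt b c -> lg_lt a c;
  lg_total : forall a b, lg_lt a b \/ a = b \/ lg_lt b a;
  lg_le_add : forall x y z, (lg_lt x y \/ x = y) ->
                (lg_lt (lg_add x z) (lg_add y z) \/ lg_add x z = lg_add y z)
}.

Definition lg_le (G : loag) (x y : G) : Prop := lg_lt x y \/ x = y.

Fixpoint lg_nmul (G : loag) (n : nat) (x : G) : G :=
  match n with
  | O => lg_zero G
  | S n' => lg_add x (lg_nmul n' x)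
  end.

Definition lg_asymp (G : loag) (x y : G) : Prop :=
  exists n m : nat, (1 <= n)%N /\ (1 <= m)%N /\
    lg_le y (lg_nmul n x) /\ lg_le x (lg_nmul m y).

(* Arc(G) = G_{>0}/≍ : elements are the equivalence classes *)
Definition arc (G : loag) : Type :=
  { P : G -> Prop | exists x, lg_lt (lg_zero G) x /\
      forall y, P y <-> (lg_lt (lg_zero G) y /\ lg_asymp x y) }.

Definition arc_lt (G : loag) (P Q : arc G) : Prop :=
  exists x y, proj1_sig P x /\ proj1_sig Q y /\
    forall n, (1 <= n)%N -> lg_lt (lg_nmul n x) y.

Definition arcb_lt (G : loag) (a b : option (arc G)) : Prop :=
  match a, b with
  | None, Some _ => True
  | Some P, Some Q => arc_lt P Q
  | _, _ => False
  end.

Definition in_G_kappa (G : loag) (K : cardinal) : Prop :=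
  has_character (@arcb_lt G) None K.

Definition in_F_kappa (S : bls) (K : cardinal) : Prop :=
  has_character (@bs_lt S) (bs_bot S) K.

Section Metrics.
Variable X : topologicalType.

Definition is_Gmetric (G : loag) (d : X -> X -> G) : Prop :=
  (forall x y, d x y = lg_zero G <-> x = y) /\
  (forall x y, lg_le (lg_zero G) (d x y)) /\
  (forall x y, d x y = d y x) /\
  (forall x y z, lg_le (d x y) (lg_add (d x z) (d z y))).

Definition Gmetric_open (G : loag) (d : X -> X -> G) (U : set X) : Prop :=
  forall x, U x -> exists (c : X) (e : G), lg_lt (lg_zero G) e /\
    lg_lt (d c x) e /\ (forall y, lg_lt (d c y) e -> U y).

Definition in_Met (G : loag) (d : X -> X -> G) : Prop :=
  is_Gmetric d /\ (forall U : set X, open U <-> Gmetric_open d U).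

(* max{a,b} in a linear order: c <= max{a,b} iff c <= a or c <= b *)
Definition is_ultrametric (S : bls) (d : X -> X -> S) : Prop :=
  (forall x y, d x y = bs_bot S <-> x = y) /\
  (forall x y, d x y = d y x) /\
  (forall x y z, bs_le (d x y) (d x z) \/ bs_le (d x y) (d z y)).

Definition ultra_open (S : bls) (d : X -> X -> S) (U : set X) : Prop :=
  forall x, U x -> exists (c : X) (e : S), e <> bs_bot S /\
    bs_lt (d c x) e /\ (forall y, bs_lt (d c y) e -> U y).

Definition in_Ult (S : bls) (d : X -> X -> S) : Prop :=
  is_ultrametric d /\ (forall U : set X, open U <-> ultra_open d U).

Definition Gcauchy (G : loag) (d : X -> X -> G) (F : set_system X) : Prop :=
  forall e : G, lg_lt (lg_zero G) e ->
    exists A, F A /\ forall x y, A x -> A y -> lg_lt (d x y) e.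

Definition Gcomplete (G : loag) (d : X -> X -> G) : Prop :=
  forall F : set_system X, ProperFilter F -> Gcauchy d F ->
    exists x : X, F --> x.

Definition ucauchy (S : bls) (d : X -> X -> S) (F : set_system X) : Prop :=
  forall e : S, e <> bs_bot S ->
    exists A, F A /\ forall x y, A x -> A y -> bs_lt (d x y) e.

Definition ucomplete (S : bls) (d : X -> X -> S) : Prop :=
  forall F : set_system X, ProperFilter F -> ucauchy d F ->
    exists x : X, F --> x.

Definition in_MG (K : cardinal) : Prop :=
  exists G : loag, in_G_kappa G K /\ exists d : X -> X -> G, in_Met d.

Definition has_infinite_gauge : Prop :=
  exists K : cardinal, infinite_card K /\ in_MG K.

Definition finally_compact (K : cardinal) : Prop :=
  forall C : set (set X),
    (forall U, C U -> open U) -> (forall x, exists U, C U /\ U x) ->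
    exists D : set (set X), D `<=` C /\ (forall x, exists U, D U /\ U x) /\
      card_lt {U : set X | D U} K.

End Metrics.

(* Both kinds of metric with character kappa amount to a level structure: a
   kappa-indexed decreasing chain of equivalence relations generating the
   topology.  Levels are read off a metric through a coinitial strictly
   decreasing kappa-sequence of radii, and conversely a level structure is
   metrized by sending x, y to the radius of the first level separating them;
   both translations preserve Cauchy filters.  So it suffices to show that X is
   finally kappa-compact iff every level structure is complete.  Finally
   kappa-compact spaces are complete by a covering argument that uses the
   regularity of kappa.  Conversely, an open cover without subcover of size
   < kappa refines to a partition of X into clopen cells; a transfinite
   recursion picks kappa points in distinct cells, and gluing all cells beyond
   stage a into one a-ball gives a level structure in which these points form
   a Cauchy sequence without limit. *)

From Pilot Require Import Defs.
From HB Require Import structures.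
From mathcomp Require Import all_boot all_order.
From mathcomp Require Import all_classical topology.

Set Implicit Arguments.
Unset Strict Implicit.
Unset Printing Implicit Defensive.
Local Open Scope classical_set_scope.

Lemma card_le_lt_trans (A B C : Type) :
  Defs.card_le A B -> Defs.card_lt B C -> Defs.card_lt A C.
Proof.
move=> [f f_inj] [[g g_inj] NleCB]; split.
  by exists (fun x => g (f x)) => x y /g_inj /f_inj.
by move=> [h h_inj]; apply: NleCB; exists (fun z => f (h z)) => x y /f_inj /h_inj.
Qed.

Lemma proj1_sig_inj (T : Type) (P : T -> Prop) : injective (@proj1_sig T P).
Proof. by move=> u v; apply: eq_sig_hprop => x p q; apply: Prop_irrelevance. Qed.

Section Ordinals.
Variable K : cardinal.
Implicit Types a b c : K.

Definition ord_le a b := ord_lt a b \/ a = b.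

Lemma ord_irr a : ~ ord_lt a a.
Proof. elim: (@ord_wf K a) => x _ IH ltxx. exact: (IH x ltxx ltxx). Qed.

Lemma ord_le_lt_trans a b c : ord_le a b -> ord_lt b c -> ord_lt a c.
Proof. by move=> [ltab|->] ltbc //; apply: ord_trans ltab ltbc. Qed.

Lemma ord_ub2 a b : exists c, ord_le a c /\ ord_le b c.
Proof.
case: (ord_total a b) => [ltab|[->|ltba]]; first by exists b; split; [left|right].
  by exists b; split; right.
by exists a; split; [right|left].
Qed.

Lemma ord_wf_min (P : K -> Prop) :
  (exists a, P a) -> exists a, P a /\ forall b, P b -> ~ ord_lt b a.
Proof.
move=> [a Pa]; apply: contrapT => Nmin; move: Pa.
elim: (@ord_wf K a) => x _ IH Px; apply: Nmin; exists x; split=> // b Pb ltbx.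
exact: IH ltbx Pb.
Qed.

Lemma infinite_card_inhabited : infinite_card K -> inhabited K.
Proof.
move=> Kinf; apply: contrapT => NK; apply: Kinf.
exists 0%N, (fun x => match NK (inhabits x) with end).
by split=> x; case: (NK (inhabits x)).
Qed.

Lemma regular_card_bounded (I : Type) (f : I -> K) :
  regular_card K -> Defs.card_lt I K -> exists a, forall i, ord_lt (f i) a.
Proof.
move=> [_ Kreg] ltIK; apply: contrapT => unbounded.
have cofinal a : exists b, (exists i, f i = b) /\ ord_le a b.
  apply: contrapT => Na; apply: unbounded; exists a => i.
  case: (ord_total (f i) a) => [//|lefa]; case: Na; exists (f i).
  by split; [exists i|case: lefa => [->|]; [right|left]].
have leAI : Defs.card_le {b | exists i, f i = b} I.
  exists (fun u : {b | exists i, f i = b} => proj1_sig (cid (proj2_sig u))) => u v E.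
  apply: proj1_sig_inj.
  by rewrite -(proj2_sig (cid (proj2_sig u))) -(proj2_sig (cid (proj2_sig v))) E.
exact: (card_le_lt_trans leAI ltIK).2 (Kreg _ cofinal).
Qed.

Lemma regular_card_no_max : regular_card K -> forall a, exists b, ord_lt a b.
Proof.
move=> Kreg a.
have ltunitK : Defs.card_lt unit K.
  split; first by exists (fun _ => a) => [[] []].
  move=> [h h_inj]; apply: Kreg.1; exists 1%N, (fun _ => 0%N); split=> // x y _.
  by apply: h_inj; case: (h x); case: (h y).
have [b ltab] := regular_card_bounded (fun _ : unit => a) Kreg ltunitK.
by exists b; apply: ltab tt.
Qed.

End Ordinals.

Section OrderedGroup.
Variable G : loag.
Local Notation "x +g y" := (lg_add x y) (at level 50, left associativity).
Local Notation z := (lg_zero G).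
Implicit Types x y u v : G.

Lemma lg_lt_asym x y : lg_lt x y -> ~ lg_lt y x.
Proof. by move=> ltxy ltyx; apply: (lg_irr (lg_trans ltxy ltyx)). Qed.

Lemma lg_le_trans x y u : lg_le x y -> lg_le y u -> lg_le x u.
Proof. by move=> [ltxy|->] [ltyu|<-]; [left; apply: lg_trans ltxy ltyu|left|left|right]. Qed.

Lemma lg_lt_le_trans x y u : lg_lt x y -> lg_le y u -> lg_lt x u.
Proof. by move=> ltxy [ltyu|<-] //; apply: lg_trans ltxy ltyu. Qed.

Lemma lg_le_lt_trans x y u : lg_le x y -> lg_lt y u -> lg_lt x u.
Proof. by move=> [ltxy|->] ltyu //; apply: lg_trans ltxy ltyu. Qed.

Lemma lg_lt_or_ge x y : lg_lt x y \/ lg_le y x.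
Proof. by case: (lg_total x y) => [|[->|]]; [left|right; right|right; left]. Qed.

Lemma lg_addr0 x : x +g z = x.
Proof. by rewrite lg_addC lg_add0. Qed.

Lemma lg_addrN x : x +g lg_opp x = z.
Proof. by rewrite lg_addC lg_addN. Qed.

Lemma lg_addrK y x : x +g y +g lg_opp y = x.
Proof. by rewrite -lg_addA lg_addrN lg_addr0. Qed.

Lemma lg_le_add2r y x u : lg_le x u -> lg_le (x +g y) (u +g y).
Proof. exact: lg_le_add. Qed.

Lemma lg_le_add2l y x u : lg_le x u -> lg_le (y +g x) (y +g u).
Proof. by rewrite !(lg_addC y); apply: lg_le_add. Qed.

Lemma lg_lt_add2r y x u : lg_lt x u -> lg_lt (x +g y) (u +g y).
Proof.
move=> ltxu; case: (lg_le_add y (or_introl ltxu)) => // Exu.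
by move: ltxu; rewrite -(lg_addrK y x) Exu lg_addrK => /lg_irr.
Qed.

Lemma lg_lt_add2l y x u : lg_lt x u -> lg_lt (y +g x) (y +g u).
Proof. by rewrite !(lg_addC y); apply: lg_lt_add2r. Qed.

Lemma lg_le_add x y u v : lg_le x y -> lg_le u v -> lg_le (x +g u) (y +g v).
Proof. by move=> lexy leuv; apply: lg_le_trans (lg_le_add2r u lexy) (lg_le_add2l y leuv). Qed.

Lemma lg_le_addr x y : lg_le z y -> lg_le x (x +g y).
Proof. by move=> /(lg_le_add2l x); rewrite lg_addr0. Qed.

Lemma lg_le_addl x y : lg_le z y -> lg_le x (y +g x).
Proof. by rewrite lg_addC; apply: lg_le_addr. Qed.

Lemma lg_nmul0 n : lg_nmul n z = z.
Proof. by elim: n => //= n ->; apply: lg_add0. Qed.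

Lemma lg_nmul1 x : lg_nmul 1 x = x.
Proof. exact: lg_addr0. Qed.

Lemma lg_nmulD n m x : lg_nmul (n + m) x = lg_nmul n x +g lg_nmul m x.
Proof.
elim: n => [|n IH]; first by rewrite add0n /= lg_add0.
by rewrite addSn /= IH lg_addA.
Qed.

Lemma lg_nmulM n m x : lg_nmul (n * m) x = lg_nmul n (lg_nmul m x).
Proof. by elim: n => [|n IH] //; rewrite mulSn lg_nmulD IH. Qed.

Lemma lg_nmul_addr n x y : lg_nmul n (x +g y) = lg_nmul n x +g lg_nmul n y.
Proof.
elim: n => [|n IH] /=; first by rewrite lg_add0.
by rewrite IH !lg_addA -(lg_addA x y) (lg_addC y) !lg_addA.
Qed.

Lemma lg_nmul_le n x y : lg_le x y -> lg_le (lg_nmul n x) (lg_nmul n y).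
Proof. by move=> lexy; elim: n => [|n IH] /=; [right|apply: lg_le_add]. Qed.

Lemma lg_nmul_lt n x y : (1 <= n)%N -> lg_lt x y -> lg_lt (lg_nmul n x) (lg_nmul n y).
Proof.
case: n => // n _ ltxy; elim: n => [|n IH]; first by rewrite !lg_nmul1.
by apply: lg_lt_le_trans (lg_lt_add2r _ ltxy) (lg_le_add2l _ (or_introl IH)).
Qed.

Lemma lg_nmul_lt_inv n x y : lg_lt (lg_nmul n x) (lg_nmul n y) -> lg_lt x y.
Proof.
move=> ltn; case: (lg_lt_or_ge x y) => // /(lg_nmul_le n) leyx.
by exfalso; apply: lg_irr (lg_le_lt_trans leyx ltn).
Qed.

Lemma lg_nmulD_le n x y : lg_le x y -> lg_le (lg_nmul n x +g lg_nmul n y) (lg_nmul (n + n) y).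
Proof. by move=> lexy; rewrite lg_nmulD; apply/lg_le_add2r/lg_nmul_le. Qed.

Definition lg_ll x y := forall n, (1 <= n)%N -> lg_lt (lg_nmul n x) y.

Lemma lg_ll_lt x y : lg_ll x y -> lg_lt x y.
Proof. by move=> /(_ 1%N isT); rewrite lg_nmul1. Qed.

Lemma lg_lt_ll_trans x y u : lg_lt x y -> lg_ll y u -> lg_ll x u.
Proof.
by move=> ltxy llyu n n_gt0; apply: lg_trans (lg_nmul_lt n_gt0 ltxy) (llyu n n_gt0).
Qed.

Lemma lg_ll_lt_trans x y u : lg_ll x y -> lg_lt y u -> lg_ll x u.
Proof. by move=> llxy ltyu n n_gt0; apply: lg_trans (llxy n n_gt0) ltyu. Qed.

Lemma lg_asymp_refl x : lg_asymp x x.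
Proof. by exists 1%N, 1%N; rewrite lg_nmul1; do 3?split=> //; right. Qed.

Lemma lg_asymp_sym x y : lg_asymp x y -> lg_asymp y x.
Proof. by move=> [n [m [? [? [? ?]]]]]; exists m, n. Qed.

Lemma lg_asymp_trans x y u : lg_asymp x y -> lg_asymp y u -> lg_asymp x u.
Proof.
move=> [n [m [n_gt0 [m_gt0 [leyx lexy]]]]] [n' [m' [n'_gt0 [m'_gt0 [leuy leyu]]]]].
exists (n' * n)%N, (m * m')%N; do 2?split; rewrite ?muln_gt0 ?n_gt0 ?m_gt0 ?n'_gt0 ?m'_gt0 //.
by rewrite !lg_nmulM; split; [apply: lg_le_trans leuy (lg_nmul_le _ leyx)
                             |apply: lg_le_trans lexy (lg_nmul_le _ leyu)].
Qed.

Lemma arc_pos (P : Defs.arc G) x : proj1_sig P x -> lg_lt z x.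
Proof. by case: P => P [? [_ HP]] /= /HP []. Qed.

Lemma arc_mem_asymp (P : Defs.arc G) x y : proj1_sig P x -> proj1_sig P y -> lg_asymp x y.
Proof.
case: P => P [w [_ HP]] /= /HP [_ asx] /HP [_ asy].
exact: lg_asymp_trans (lg_asymp_sym asx) asy.
Qed.

Lemma arc_nonempty (P : Defs.arc G) : exists x, proj1_sig P x.
Proof.
by case: P => P [x [x_gt0 HP]] /=; exists x; apply/HP; split=> //; apply: lg_asymp_refl.
Qed.

Lemma arc_lt_ll (P Q : Defs.arc G) x y :
  arc_lt P Q -> proj1_sig P x -> proj1_sig Q y -> lg_ll x y.
Proof.
move=> [x' [y' [Px' [Qy' llx'y']]]] Px Qy n n_gt0.
have [_ [m [_ [m_gt0 [_ lexx']]]]] := arc_mem_asymp Px Px'.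
have [m' [_ [m'_gt0 [_ [ley'y _]]]]] := arc_mem_asymp Qy Qy'.
apply: (@lg_nmul_lt_inv m'); apply: lg_le_lt_trans (_ : lg_le _ (lg_nmul (m' * n * m) x')) _.
  by rewrite -lg_nmulM (lg_nmulM (m' * n) m); apply: lg_nmul_le.
by apply: lg_lt_le_trans ley'y; apply: llx'y'; rewrite !muln_gt0 m_gt0 m'_gt0 n_gt0.
Qed.

Definition arc_of x (x_gt0 : lg_lt z x) : Defs.arc G :=
  exist _ (fun y => lg_lt z y /\ lg_asymp x y)
    (ex_intro _ x (conj x_gt0 (fun y => iff_refl _))).

Lemma arc_of_mem x (x_gt0 : lg_lt z x) : proj1_sig (arc_of x_gt0) x.
Proof. by split=> //; apply: lg_asymp_refl. Qed.

End OrderedGroup.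

(* A coinitial sequence of Arc(G)^bot, read through representatives. *)
Lemma Gkappa_scale (K : cardinal) (G : loag) : regular_card K -> in_G_kappa G K ->
  exists g : K -> G, (forall a, lg_lt (lg_zero G) (g a)) /\
    (forall a b, ord_lt a b -> lg_ll (g b) (g a)) /\
    (forall e, lg_lt (lg_zero G) e -> exists a, lg_ll (g a) e).
Proof.
move=> Kreg [_ [[s [s_neq0 [s_decr s_coinit]]] _]].
have s_some a : exists P, s a = Some P.
  by case E: (s a) => [P|]; [exists P|case: (s_neq0 a)].
pose P a := proj1_sig (cid (s_some a)).
have PE a : s a = Some (P a) := proj2_sig (cid (s_some a)).
pose g a := proj1_sig (cid (arc_nonempty (P a))).
have Pg a : proj1_sig (P a) (g a) := proj2_sig (cid (arc_nonempty (P a))).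
have P_decr a b : ord_lt a b -> arc_lt (P b) (P a).
  by move=> /s_decr; rewrite !PE.
exists g; split; [|split].
- by move=> a; apply: arc_pos (Pg a).
- by move=> a b /P_decr ltPba; apply: arc_lt_ll ltPba (Pg b) (Pg a).
- move=> e e_gt0; have [a] := s_coinit (Some (arc_of e_gt0)) ltac:(by []).
  rewrite PE => -[ltPa|[EPa]].
    by exists a; apply: arc_lt_ll ltPa (Pg a) (arc_of_mem e_gt0).
  have [b ltab] := regular_card_no_max Kreg a; exists b.
  by apply: arc_lt_ll (P_decr a b ltab) (Pg b) _; rewrite EPa; apply: arc_of_mem.
Qed.

(* The relations [cl a] play the role of "distance < r_a" for a coinitial,
   strictly decreasing kappa-sequence of radii (r_a). *)
Record level_structure (X : topologicalType) (K : cardinal)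
    (cl : K -> X -> X -> Prop) : Prop := LevelStructure {
  level_refl : forall a x, cl a x x;
  level_sym : forall a x y, cl a x y -> cl a y x;
  level_trans : forall a x y z, cl a x y -> cl a y z -> cl a x z;
  level_anti : forall a b x y, ord_lt a b -> cl b x y -> cl a x y;
  level_sep : forall x y, x <> y -> exists a, ~ cl a x y;
  level_open : forall U : set X,
    open U <-> forall x, U x -> exists a, forall y, cl a x y -> U y
}.

Section Levels.
Variables (X : topologicalType) (K : cardinal).
Implicit Types cl : K -> X -> X -> Prop.

Definition level_cauchy cl (F : set_system X) :=
  forall a, exists A, F A /\ forall x y, A x -> A y -> cl a x y.

Definition level_complete cl :=
  forall F : set_system X, ProperFilter F -> level_cauchy cl F -> exists x : X, F --> x.

Variable cl : K -> X -> X -> Prop.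
Hypothesis cl_level : level_structure cl.

Lemma level_anti_le a b x y : ord_le a b -> cl b x y -> cl a x y.
Proof. by move=> [ltab|->] //; apply: (level_anti cl_level ltab). Qed.

Lemma level_ball_open a x : open [set y | cl a x y].
Proof.
apply/(level_open cl_level) => y clxy; exists a => w clyw.
exact: (level_trans cl_level clxy clyw).
Qed.

Lemma level_nbhs x (A : set X) : nbhs x A -> exists a, forall y, cl a x y -> A y.
Proof.
rewrite nbhsE => -[B [/(level_open cl_level) Bopen Bx] BA].
by have [a ballB] := Bopen x Bx; exists a => y /ballB /BA.
Qed.

(* A Cauchy filter without limit escapes some ball around each point; fewer
   than kappa of these balls cover X, their levels are bounded by some a by
   regularity, and an a-small member of the filter lies in one of them. *)
Lemma finally_compact_level_complete :
  regular_card K -> finally_compact X K -> level_complete cl.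
Proof.
move=> Kreg Xfc F F_proper Fcauchy; apply: contrapT => Fncvg.
have escape x : exists a, ~ F [set y | cl a x y].
  apply: contrapT => Nescape; apply: Fncvg; exists x => A /level_nbhs [a ballA].
  by apply: filterS ballA _; apply: contrapT => NFball; apply: Nescape; exists a.
pose r x := proj1_sig (cid (escape x)).
have r_escape x : ~ F [set y | cl (r x) x y] := proj2_sig (cid (escape x)).
pose C V := exists x, V = [set y | cl (r x) x y].
have C_open V : C V -> open V by move=> [x ->]; apply: level_ball_open.
have C_cover x : exists V, C V /\ V x.
  by exists [set y | cl (r x) x y]; split; [exists x|apply: (level_refl cl_level)].
have [D [DC [Dcover ltDK]]] := Xfc C C_open C_cover.
pose c (u : {V | D V}) := proj1_sig (cid (DC _ (proj2_sig u))).
have cE u : proj1_sig u = [set y | cl (r (c u)) (c u) y] :=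
  proj2_sig (cid (DC _ (proj2_sig u))).
have [a r_lt] := regular_card_bounded (fun u => r (c u)) Kreg ltDK.
have [A [FA A_small]] := Fcauchy a.
have [y Ay] := filter_ex FA.
have [V [DV Vy]] := Dcover y.
pose u := exist D V DV; move: Vy; rewrite -[V]/(proj1_sig u) cE => /= clcy.
apply: (r_escape (c u)); apply: filterS FA => w Aw /=.
exact: (level_trans cl_level clcy (level_anti cl_level (r_lt u) (A_small _ _ Ay Aw))).
Qed.

End Levels.

Section BottomedOrder.
Variable S : bls.
Implicit Types s t u : S.

Lemma bs_le_lt_trans s t u : bs_le s t -> bs_lt t u -> bs_lt s u.
Proof. by move=> [ltst|->] ltsu //; apply: bs_trans ltst ltsu. Qed.

Lemma bs_lt_le_trans s t u : bs_lt s t -> bs_le t u -> bs_lt s u.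
Proof. by move=> ltst [lttu|<-] //; apply: bs_trans ltst lttu. Qed.

Lemma bs_bot_lt s : s <> bs_bot S -> bs_lt (bs_bot S) s.
Proof. by case: (bs_least s) => // ->. Qed.

End BottomedOrder.

Lemma ultrametric_lt_trans (X : topologicalType) (S : bls) (d : X -> X -> S) e x y w :
  is_ultrametric d -> bs_lt (d x y) e -> bs_lt (d y w) e -> bs_lt (d x w) e.
Proof.
move=> [_ [_ d_max]] ltdxy ltdyw.
by case: (d_max x w y) => ledxw; apply: bs_le_lt_trans ledxw _.
Qed.

(* Both summands of the triangle inequality are bounded by
   (n + n) max(d x y, d y w), hence a single e serves for all multiples. *)
Lemma Gmetric_ll_trans (X : topologicalType) (G : loag) (d : X -> X -> G) e x y w :
  is_Gmetric d -> lg_ll (d x y) e -> lg_ll (d y w) e -> lg_ll (d x w) e.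
Proof.
move=> [_ [_ [_ d_tri]]] llxy llyw n n_gt0.
apply: lg_le_lt_trans (lg_nmul_le n (d_tri x w y)) _; rewrite lg_nmul_addr.
have nn_gt0 : (1 <= n + n)%N by rewrite addn_gt0 n_gt0.
case: (lg_lt_or_ge (d x y) (d y w)) => [lt|le].
  exact: lg_le_lt_trans (lg_nmulD_le n (or_introl lt)) (llyw _ nn_gt0).
by rewrite lg_addC; apply: lg_le_lt_trans (lg_nmulD_le n le) (llxy _ nn_gt0).
Qed.

Lemma Gmetric_level (X : topologicalType) (K : cardinal) (G : loag) (d : X -> X -> G) :
  regular_card K -> in_G_kappa G K -> in_Met d ->
  exists cl : K -> X -> X -> Prop, level_structure cl /\ (level_complete cl -> Gcomplete d).
Proof.
move=> Kreg GK [d_met d_open]; have [d0 [d_ge0 [dC d_tri]]] := d_met.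
have [g [g_gt0 [g_decr g_coinit]]] := Gkappa_scale Kreg GK.
have d_refl x : d x x = lg_zero G by apply/d0.
pose cl a x y := lg_ll (d x y) (g a).
have cl_small a : exists e, lg_lt (lg_zero G) e /\ forall x y, lg_lt (d x y) e -> cl a x y.
  have [b ltab] := regular_card_no_max Kreg a.
  by exists (g b); split=> // x y /lg_lt_ll_trans; apply; apply: g_decr.
exists cl; split=> [|cl_complete F F_proper Fcauchy]; last first.
  apply: cl_complete => // a; have [e [e_gt0 small]] := cl_small a.
  have [A [FA A_small]] := Fcauchy e e_gt0.
  by exists A; split=> // x y Ax Ay; apply/small/A_small.
constructor.
- by move=> a x n _; rewrite d_refl lg_nmul0.
- by move=> a x y; rewrite /cl dC.
- by move=> a x y w; apply: (Gmetric_ll_trans d_met).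
- by move=> a b x y /g_decr /lg_ll_lt ltgba clb; apply: lg_ll_lt_trans clb ltgba.
- move=> x y neqxy.
  have dxy_gt0 : lg_lt (lg_zero G) (d x y) by case: (d_ge0 x y) => // /esym /d0.
  have [a llga] := g_coinit _ dxy_gt0; exists a => /lg_ll_lt ltdg.
  exact: lg_lt_asym ltdg (lg_ll_lt llga).
- move=> U; rewrite d_open; split=> [Uball x Ux|Ulevel x Ux].
    have [c [e [e_gt0 [ltdcx ballU]]]] := Uball x Ux.
    pose e' := lg_add e (lg_opp (d c x)).
    have e'_gt0 : lg_lt (lg_zero G) e'.
      by have := lg_lt_add2r (lg_opp (d c x)) ltdcx; rewrite lg_addrN.
    have [a /lg_ll_lt ltgae'] := g_coinit _ e'_gt0.
    exists a => y /lg_ll_lt ltdxy; apply: ballU; apply: lg_le_lt_trans (d_tri c y x) _.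
    have -> : e = lg_add (d c x) e' by rewrite /e' lg_addC -lg_addA lg_addN lg_addr0.
    exact: lg_lt_add2l (lg_trans ltdxy ltgae').
  have [a ballU] := Ulevel x Ux; have [e [e_gt0 small]] := cl_small a.
  by exists x, e; rewrite d_refl; do 2?split=> //; move=> y /small /ballU.
Qed.

Lemma ultrametric_level (X : topologicalType) (K : cardinal) (S : bls) (d : X -> X -> S) :
  in_F_kappa S K -> in_Ult d ->
  exists cl : K -> X -> X -> Prop, level_structure cl /\ (level_complete cl -> ucomplete d).
Proof.
move=> [_ [[s [s_neq0 [s_decr s_coinit]]] _]] [d_ult d_open].
have [d0 [dC _]] := d_ult.
have d_refl x : d x x = bs_bot S by apply/d0.
pose cl a x y := bs_lt (d x y) (s a).
exists cl; split=> [|cl_complete F F_proper Fcauchy]; last first.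
  apply: cl_complete => // a; have [A [FA A_small]] := Fcauchy (s a) (s_neq0 a).
  by exists A.
constructor.
- by move=> a x; rewrite /cl d_refl; apply: bs_bot_lt.
- by move=> a x y; rewrite /cl dC.
- by move=> a x y w; apply: ultrametric_lt_trans.
- by move=> a b x y /s_decr ltsba clb; apply: bs_trans clb ltsba.
- move=> x y neqxy; have [a lesd] := s_coinit (d x y) (fun E => neqxy (proj1 (d0 x y) E)).
  by exists a => /(bs_le_lt_trans lesd) /bs_irr.
- move=> U; rewrite d_open; split=> [Uball x Ux|Ulevel x Ux].
    have [c [e [e_neq0 [ltdcx ballU]]]] := Uball x Ux.
    have [a lese] := s_coinit e e_neq0.
    exists a => y clxy; apply: ballU; apply: ultrametric_lt_trans d_ult ltdcx _.
    exact: bs_lt_le_trans clxy lese.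
  have [a ballU] := Ulevel x Ux.
  by exists x, (s a); rewrite d_refl; do 2?split=> //; apply: bs_bot_lt.
Qed.

Definition le_of_lt (T : Type) (lt : T -> T -> Prop) (t u : T) := lt t u \/ t = u.

Record decreasing_scale (K : cardinal) (T : Type) (lt : T -> T -> Prop) (bot : T)
    (v : K -> T) : Prop := DecreasingScale {
  scale_irr : forall t, ~ lt t t;
  scale_trans : forall t u w, lt t u -> lt u w -> lt t w;
  scale_total : forall t u, lt t u \/ t = u \/ lt u t;
  scale_gt_bot : forall a, lt bot (v a);
  scale_decr : forall a b, ord_lt a b -> lt (v b) (v a)
}.

Section LevelDistance.
Variables (X : topologicalType) (K : cardinal) (cl : K -> X -> X -> Prop).
Hypothesis cl_level : level_structure cl.
Variables (T : Type) (lt : T -> T -> Prop) (bot : T) (v : K -> T).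
Hypothesis v_scale : decreasing_scale lt bot v.
Let lt_irrefl := scale_irr v_scale.
Let lt_transitive := scale_trans v_scale.
Let lt_total := scale_total v_scale.
Let v_gt_bot := scale_gt_bot v_scale.
Let v_decr := scale_decr v_scale.
Local Notation le := (le_of_lt lt).

Definition level_dist x y : T :=
  match pselect (x = y) with
  | left _ => bot
  | right neqxy => v (proj1_sig (cid (ord_wf_min (level_sep cl_level neqxy))))
  end.

Lemma level_dist_refl x : level_dist x x = bot.
Proof. by rewrite /level_dist; case: pselect. Qed.

Lemma level_dist_neq x y : x <> y -> exists b, level_dist x y = v b /\
  ~ cl b x y /\ forall c, ~ cl c x y -> ~ ord_lt c b.
Proof.
rewrite /level_dist => neqxy; case: pselect => // neqxy'.
by set w := cid _; exists (proj1_sig w); split=> //; apply: proj2_sig w.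
Qed.

Lemma level_dist_lt a x y : lt (level_dist x y) (v a) <-> cl a x y.
Proof.
case: (pselect (x = y)) => [<-|neqxy].
  by rewrite level_dist_refl; split=> _; [apply: (level_refl cl_level)|apply: v_gt_bot].
have [b [-> [Nclb b_min]]] := level_dist_neq neqxy; split=> [ltvba|cla].
  apply: contrapT => Ncla; have := b_min a Ncla.
  case: (ord_total a b) => [//|[Eab|ltba] _]; first by move: ltvba; rewrite Eab => /lt_irrefl.
  exact: lt_irrefl (lt_transitive ltvba (v_decr ltba)).
case: (ord_total a b) => [/v_decr //|[Eab|ltba]]; first by move: Nclb; rewrite -Eab.
by case: Nclb; apply: (level_anti cl_level ltba cla).
Qed.

Lemma level_dist_ge_bot x y : le bot (level_dist x y).
Proof.
case: (pselect (x = y)) => [<-|/level_dist_neq [b [-> _]]]; last by left.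
by rewrite level_dist_refl; right.
Qed.

Lemma level_dist_eq_bot x y : level_dist x y = bot <-> x = y.
Proof.
split=> [Edxy|<-]; last exact: level_dist_refl.
apply: contrapT => /level_dist_neq [b [Edb _]].
by move: (v_gt_bot b); rewrite -Edb Edxy => /lt_irrefl.
Qed.

Lemma level_dist_sym x y : level_dist x y = level_dist y x.
Proof.
case: (pselect (x = y)) => [<-//|neqxy].
have neqyx : y <> x by move=> /esym.
have [b [-> [Nclb b_min]]] := level_dist_neq neqxy.
have [c [-> [Nclc c_min]]] := level_dist_neq neqyx.
have Nclb' : ~ cl b y x by move=> /(level_sym cl_level).
have Nclc' : ~ cl c x y by move=> /(level_sym cl_level).
by case: (ord_total b c) => [/(c_min b Nclb')|[->|/(b_min c Nclc')]].
Qed.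

Lemma level_dist_max x y w :
  le (level_dist x y) (level_dist x w) \/ le (level_dist x y) (level_dist w y).
Proof.
case: (pselect (x = y)) => [<-|neqxy].
  by rewrite level_dist_refl; left; apply: level_dist_ge_bot.
apply: contrapT => Nle.
have ltT t u : ~ le u t -> lt t u.
  by move=> Nleut; case: (lt_total t u) => [|[Etu|ltut]] //; case: Nleut; [right|left].
have [b [Edb [Nclb _]]] := level_dist_neq neqxy.
have /ltT : ~ le (level_dist x y) (level_dist x w) by move=> ?; apply: Nle; left.
have /ltT : ~ le (level_dist x y) (level_dist w y) by move=> ?; apply: Nle; right.
rewrite Edb => /level_dist_lt clwy /level_dist_lt clxw.
exact: Nclb (level_trans cl_level clxw clwy).
Qed.

Lemma level_dist_lt_trans e x y w :
  lt (level_dist x y) e -> lt (level_dist y w) e -> lt (level_dist x w) e.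
Proof.
move=> ltxy ltyw; case: (level_dist_max x w y) => [[ltdd|->]|[ltdd|->]] //.
  exact: lt_transitive ltdd ltxy.
exact: lt_transitive ltdd ltyw.
Qed.

Variable pos : T -> Prop.
Hypothesis v_pos : forall a, pos (v a).
Hypothesis v_coinitial : forall e, pos e -> exists a, le (v a) e.

Lemma level_dist_small e : pos e -> exists a, forall x y, cl a x y -> lt (level_dist x y) e.
Proof.
move=> /v_coinitial [a leae]; exists a => x y /level_dist_lt ltda.
by case: leae => [/(lt_transitive ltda)|<-].
Qed.

Lemma level_dist_open (U : set X) :
  (forall x, U x -> exists a, forall y, cl a x y -> U y) <->
  (forall x, U x -> exists c e, pos e /\ lt (level_dist c x) e /\
     forall y, lt (level_dist c y) e -> U y).
Proof.
split=> [Ulevel x Ux|Uball x Ux].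
  have [a ballU] := Ulevel x Ux.
  by exists x, (v a); rewrite level_dist_refl; do 2?split=> //; move=> y /level_dist_lt /ballU.
have [c [e [e_pos [ltdcx ballU]]]] := Uball x Ux.
have [a small] := level_dist_small e_pos.
by exists a => y /small /(level_dist_lt_trans ltdcx) /ballU.
Qed.

End LevelDistance.

Lemma level_Gmetric (X : topologicalType) (K : cardinal) (G : loag)
    (cl : K -> X -> X -> Prop) :
  regular_card K -> level_structure cl -> in_G_kappa G K ->
  exists d : X -> X -> G, in_Met d /\ (Gcomplete d -> level_complete cl).
Proof.
move=> Kreg cl_level GK; have [g [g_gt0 [g_decr g_coinit]]] := Gkappa_scale Kreg GK.
have g_scale : decreasing_scale (@lg_lt G) (lg_zero G) g.
  by split=> //; [apply: lg_irr|apply: lg_trans|apply: lg_total|move=> a b /g_decr /lg_ll_lt].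
have g_coinit' e : lg_lt (lg_zero G) e -> exists a, lg_le (g a) e.
  by move=> /g_coinit [a /lg_ll_lt ltgae]; exists a; left.
pose d := level_dist cl_level (lg_zero G) g.
have d_ge0 x y : lg_le (lg_zero G) (d x y) := level_dist_ge_bot cl_level g_scale x y.
exists d; split=> [|d_complete F F_proper Fcauchy].
  split=> [|U]; last first.
    by rewrite (level_open cl_level); exact: (level_dist_open cl_level g_scale g_gt0 g_coinit' U).
  split; first exact: (level_dist_eq_bot cl_level g_scale).
  split; first exact: d_ge0.
  split; first exact: level_dist_sym.
  move=> x y w; case: (level_dist_max cl_level g_scale x y w) => le.
    exact: lg_le_trans le (lg_le_addr _ (d_ge0 _ _)).
  exact: lg_le_trans le (lg_le_addl _ (d_ge0 _ _)).
apply: d_complete => // e e_gt0.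
have [a small] := level_dist_small cl_level g_scale g_coinit' e_gt0.
by have [A [FA A_small]] := Fcauchy a; exists A; split=> // x y Ax Ay; apply/small/A_small.
Qed.

Lemma level_ultrametric (X : topologicalType) (K : cardinal) (S : bls)
    (cl : K -> X -> X -> Prop) :
  level_structure cl -> in_F_kappa S K ->
  exists d : X -> X -> S, in_Ult d /\ (ucomplete d -> level_complete cl).
Proof.
move=> cl_level [_ [[s [s_neq0 [s_decr s_coinit]]] _]].
have s_scale : decreasing_scale (@bs_lt S) (bs_bot S) s.
  by split=> //; [apply: bs_irr|apply: bs_trans|apply: bs_total|move=> a; apply: bs_bot_lt].
pose d := level_dist cl_level (bs_bot S) s.
exists d; split=> [|d_complete F F_proper Fcauchy].
  split=> [|U]; last first.
    by rewrite (level_open cl_level); exact: (level_dist_open cl_level s_scale s_neq0 s_coinit U).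
  split; first exact: (level_dist_eq_bot cl_level s_scale).
  split; first exact: level_dist_sym.
  exact: (level_dist_max cl_level s_scale).
apply: d_complete => // e e_neq0.
have [a small] := level_dist_small cl_level s_scale s_coinit e_neq0.
by have [A [FA A_small]] := Fcauchy a; exists A; split=> // x y Ax Ay; apply/small/A_small.
Qed.

Definition tail_filter (K : cardinal) (T : Type) (p : K -> T) : set_system T :=
  [set A | exists a, forall b, ord_lt a b -> A (p b)].

Lemma tail_filter_proper (K : cardinal) (T : Type) (p : K -> T) :
  regular_card K -> ProperFilter (tail_filter p).
Proof.
move=> Kreg; have Kfilter : Filter (tail_filter p).
  constructor.
  - by case: (infinite_card_inhabited Kreg.1) => a; exists a.
  - move=> A B [a1 A_tail] [a2 B_tail]; have [c [le1c le2c]] := ord_ub2 a1 a2.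
    by exists c => b ltcb; split; [apply: A_tail|apply: B_tail]; apply: ord_le_lt_trans ltcb.
  - by move=> A B AB [a A_tail]; exists a => b /A_tail /AB.
constructor=> // -[a set0_tail]; have [b ltab] := regular_card_no_max Kreg a.
exact: set0_tail b ltab.
Qed.

Section NotFinallyCompact.
Variables (X : topologicalType) (K : cardinal) (cl : K -> X -> X -> Prop).
Hypothesis cl_level : level_structure cl.
Hypothesis Kreg : regular_card K.
Variable C : set (set X).
Hypothesis C_open : forall U, C U -> open U.
Hypothesis C_cover : forall x, exists U, C U /\ U x.
Hypothesis C_no_small_subcover : forall D : set (set X), D `<=` C ->
  (forall x, exists U, D U /\ U x) -> ~ Defs.card_lt {U : set X | D U} K.
Variable x0 : X.

Let fits x a := exists U, C U /\ forall y, cl a x y -> U y.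

Let fits_some x : exists a, fits x a.
Proof.
have [U [CU Ux]] := C_cover x.
by have [a ballU] := proj1 (level_open cl_level U) (C_open CU) x Ux; exists a, U.
Qed.

Let fit_level_spec x := cid (ord_wf_min (fits_some x)).
Let fit_level x := proj1_sig (fit_level_spec x).
Let fit_levelP x : fits x (fit_level x) := (proj2_sig (fit_level_spec x)).1.
Let fit_level_min x b : fits x b -> ~ ord_lt b (fit_level x) :=
  (proj2_sig (fit_level_spec x)).2 b.

(* Each ball of the least level fitting into C is a clopen cell; the cells
   partition X and each lies in a member of C. *)
Definition cell x y := cl (fit_level x) x y.

Lemma cell_fit_level x y : cell x y -> fit_level y = fit_level x.
Proof.
move=> cellxy; have [U [CU ballU]] := fit_levelP x.
have fits_y : fits y (fit_level x).
  by exists U; split=> // w clyw; apply/ballU/(level_trans cl_level cellxy clyw).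
case: (ord_total (fit_level y) (fit_level x)) => [ltyx|[//|/(fit_level_min fits_y) //]].
case: (fit_level_min (x := x) (b := fit_level y)) => //.
have [V [CV ballV]] := fit_levelP y; exists V; split=> // w clxw; apply: ballV.
exact: (level_trans cl_level (level_sym cl_level (level_anti cl_level ltyx cellxy)) clxw).
Qed.

Lemma cell_refl x : cell x x.
Proof. exact: (level_refl cl_level). Qed.

Lemma cell_sym x y : cell x y -> cell y x.
Proof.
by move=> cellxy; rewrite /cell (cell_fit_level cellxy); apply: (level_sym cl_level).
Qed.

Lemma cell_trans x y w : cell x y -> cell y w -> cell x w.
Proof.
move=> cellxy; rewrite /cell (cell_fit_level cellxy).
exact: (level_trans cl_level cellxy).
Qed.

Let cell_cover_spec x := cid (fit_levelP x).
Let cell_cover x := proj1_sig (cell_cover_spec x).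
Let cell_coverC x : C (cell_cover x) := (proj2_sig (cell_cover_spec x)).1.
Let cell_coverP x y : cell x y -> cell_cover x y := (proj2_sig (cell_cover_spec x)).2 y.

(* A point x0 is needed only as a junk value: a fresh cell always exists. *)
Definition next_pt (b : K) (prev : forall c : K, ord_lt c b -> X) : X :=
  match pselect (exists x, forall c (ltcb : ord_lt c b), ~ cell (prev c ltcb) x) with
  | left fresh => proj1_sig (cid fresh)
  | right _ => x0
  end.

Definition pts : K -> X := Fix (@ord_wf K) (fun _ => X) (@next_pt).

Lemma pts_eq b : pts b = @next_pt b (fun c _ => pts c).
Proof.
rewrite /pts Fix_eq // => a f g fg; congr next_pt.
by apply: functional_extensionality_dep => c; apply: functional_extensionality_dep.
Qed.

(* Fewer than kappa cells cannot cover X, since their covering members of C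
   would form a small subcover. *)
Lemma pts_new_cell c b : ord_lt c b -> ~ cell (pts c) (pts b).
Proof.
have fresh : exists x, forall c (ltcb : ord_lt c b), ~ cell (pts c) x.
  apply: contrapT => Nfresh.
  have old_cell x : exists c, ord_lt c b /\ cell (pts c) x.
    apply: contrapT => Nold; apply: Nfresh; exists x => c' ltcb cellx.
    by apply: Nold; exists c'.
  pose D U := exists c, ord_lt c b /\ U = cell_cover (pts c).
  apply: (C_no_small_subcover (D := D)).
  - by move=> U [c' [_ ->]]; apply: cell_coverC.
  - move=> x; have [c' [ltcb cellx]] := old_cell x.
    by exists (cell_cover (pts c')); split; [exists c'|apply: cell_coverP].
  apply: card_le_lt_trans (@ord_initial K b).
  exists (fun u : {U | D U} => exist (fun c => ord_lt c b)
    (proj1_sig (cid (proj2_sig u))) (proj2_sig (cid (proj2_sig u))).1).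
  move=> u v /(f_equal (@proj1_sig _ _)) /= Euv; apply: proj1_sig_inj.
  by rewrite (proj2_sig (cid (proj2_sig u))).2 (proj2_sig (cid (proj2_sig v))).2 Euv.
move=> ltcb; rewrite (pts_eq b) /next_pt; case: pselect => [fresh'|//].
exact: (proj2_sig (cid fresh')) c ltcb.
Qed.

Lemma pts_cell_inj b b' x : cell (pts b) x -> cell (pts b') x -> b = b'.
Proof.
move=> cellbx cellb'x; have cellbb' := cell_trans cellbx (cell_sym cellb'x).
case: (ord_total b b') => [ltbb'|[//|ltb'b]]; first by case: (pts_new_cell ltbb').
by case: (pts_new_cell ltb'b); apply: cell_sym.
Qed.

Definition beyond a x := exists b, ord_lt a b /\ cell (pts b) x.

Lemma beyond_cell a x y : cell x y -> beyond a x -> beyond a y.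
Proof. by move=> cellxy [b [ltab cellbx]]; exists b; split=> //; apply: cell_trans cellxy. Qed.

Lemma beyond_anti a b x : ord_lt a b -> beyond b x -> beyond a x.
Proof. by move=> ltab [c [ltbc cellcx]]; exists c; split=> //; apply: ord_trans ltbc. Qed.

Lemma not_beyond_above x a : exists c, ord_le a c /\ ~ beyond c x.
Proof.
case: (pselect (exists b, cell (pts b) x)) => [[b cellbx]|Ncell]; last first.
  by exists a; split; [right|move=> [b [_ cellbx]]; apply: Ncell; exists b].
have [c [leac lebc]] := ord_ub2 a b; exists c; split=> // -[b' [ltcb' cellb'x]].
rewrite (pts_cell_inj cellb'x cellbx) in ltcb'.
exact: ord_irr (ord_le_lt_trans lebc ltcb').
Qed.

(* All cells beyond stage a are glued into a single a-ball. *)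
Definition glued a x y := (cell x y /\ cl a x y) \/ (beyond a x /\ beyond a y).

Lemma glued_level : level_structure glued.
Proof.
constructor.
- by move=> a x; left; split; [apply: cell_refl|apply: (level_refl cl_level)].
- move=> a x y [[cellxy clxy]|[]]; last by right.
  by left; split; [apply: cell_sym|apply: (level_sym cl_level)].
- move=> a x y w [[cellxy clxy]|[bax bay]] [[cellyw clyw]|[bay' baw]].
  + by left; split; [apply: cell_trans cellyw|apply: (level_trans cl_level clxy)].
  + by right; split=> //; exact: (beyond_cell (cell_sym cellxy) bay').
  + by right; split=> //; exact: (beyond_cell cellyw bay).
  + by right.
- move=> a b x y ltab [[cellxy clxy]|[bbx bby]].
    by left; split=> //; apply: (level_anti cl_level ltab).
  by right; split; apply: beyond_anti ltab _.
- move=> x y neqxy; have [a Ncla] := level_sep cl_level neqxy.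
  have [c [leac Nbc]] := not_beyond_above x a.
  by exists c => -[[_ clc]|[bc _]] //; apply/Ncla/(level_anti_le cl_level leac).
move=> U; rewrite (level_open cl_level); split=> [Ulevel x Ux|Uglued x Ux].
  have [a ballU] := Ulevel x Ux; have [c [leac Nbc]] := not_beyond_above x a.
  by exists c => y [[_ clc]|[bc _]] //; apply/ballU/(level_anti_le cl_level leac).
have [a ballU] := Uglued x Ux; have [c [leac lefc]] := ord_ub2 a (fit_level x).
exists c => y clcxy; apply: ballU; left.
by split; [apply: (level_anti_le cl_level lefc)|apply: (level_anti_le cl_level leac)].
Qed.

Lemma pts_tail_cauchy : level_cauchy glued (tail_filter pts).
Proof.
move=> a; exists [set y | exists b, ord_lt a b /\ y = pts b]; split.
  by exists a => b ltab; exists b.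
move=> x y [b [ltab ->]] [b' [ltab' ->]].
by right; split; [exists b|exists b']; split=> //; apply: cell_refl.
Qed.

(* The cell of x is an open neighbourhood containing at most one point of the
   sequence. *)
Lemma pts_tail_not_cvg : ~ exists x : X, tail_filter pts --> x.
Proof.
move=> [x cvgx].
have [a cell_tail] : tail_filter pts (cell x).
  by apply/cvgx/open_nbhs_nbhs; split; [apply: level_ball_open|apply: cell_refl].
have [b ltab] := regular_card_no_max Kreg a; have [b' ltbb'] := regular_card_no_max Kreg b.
apply: (pts_new_cell ltbb'); apply: cell_trans (cell_sym (cell_tail b ltab)) _.
exact: cell_tail b' (ord_trans ltab ltbb').
Qed.

Lemma exists_incomplete_level :
  exists cl' : K -> X -> X -> Prop, level_structure cl' /\ ~ level_complete cl'.
Proof.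
exists glued; split=> [|glued_complete]; first exact: glued_level.
by apply/pts_tail_not_cvg/glued_complete; [apply: tail_filter_proper|apply: pts_tail_cauchy].
Qed.

End NotFinallyCompact.

Lemma finally_compact_iff_level_complete (X : topologicalType) (K : cardinal)
    (cl : K -> X -> X -> Prop) :
  regular_card K -> level_structure cl ->
  finally_compact X K <->
  forall cl' : K -> X -> X -> Prop, level_structure cl' -> level_complete cl'.
Proof.
move=> Kreg cl_level; split=> [Xfc cl' cl'_level|all_complete].
  exact: finally_compact_level_complete.
apply: contrapT => Nfc.
have [C [C_open [C_cover C_no_small]]] : exists C : set (set X),
    (forall U, C U -> open U) /\ (forall x, exists U, C U /\ U x) /\
    (forall D, D `<=` C -> (forall x, exists U, D U /\ U x) ->
       ~ Defs.card_lt {U : set X | D U} K).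
  apply: contrapT => NC; apply: Nfc => C C_open C_cover; apply: contrapT => Nsub.
  apply: NC; exists C; split=> //; split=> // D DC Dcover ltDK.
  by apply: Nsub; exists D.
have [x0 _] : exists x : X, True.
  apply: contrapT => NX; apply: (C_no_small set0) => // [x|].
    by case: NX; exists x.
  split; first by exists (fun u : {U | set0 U} => match proj2_sig u with end) => -[? []].
  by move=> [f _]; case: (infinite_card_inhabited Kreg.1) => a; case: (f a) => ? [].
have [cl' [cl'_level Ncomplete]] :=
  exists_incomplete_level cl_level Kreg C_open C_cover C_no_small x0.
exact: Ncomplete (all_complete _ cl'_level).
Qed.

Section DualOrdinal.
Variable K : cardinal.

Definition dual_lt (s t : option K) : Prop :=
  match s, t with
  | None, Some _ => True
  | Some a, Some b => ord_lt b a
  | _, _ => False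
  end.

Lemma dual_lt_irr s : ~ dual_lt s s.
Proof. by case: s => [a|] //=; apply: ord_irr. Qed.

Lemma dual_lt_trans s t u : dual_lt s t -> dual_lt t u -> dual_lt s u.
Proof.
by case: s => [a|]; case: t => [b|]; case: u => [c|] //= ltba ltcb; apply: ord_trans ltcb ltba.
Qed.

Lemma dual_lt_total s t : dual_lt s t \/ s = t \/ dual_lt t s.
Proof.
case: s => [a|]; case: t => [b|] /=; try by [left|right; left|right; right].
by case: (ord_total a b) => [|[->|]]; [right; right|right; left|left].
Qed.

Lemma dual_lt_least s : dual_lt None s \/ None = s.
Proof. by case: s => [a|]; [left|right]. Qed.

Definition dual_bls : bls := BLS dual_lt_irr dual_lt_trans dual_lt_total dual_lt_least.

Lemma dual_bls_character : regular_card K -> in_F_kappa dual_bls K.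
Proof.
move=> Kreg; have [a0] := infinite_card_inhabited Kreg.1.
split; first by exists.
split; first by exists Some; do 2?split=> //; case=> [a|] // _; exists a; right.
move=> L _ ltLK [s [s_neq0 [_ s_coinit]]].
pose f l := if s l is Some b then b else a0.
have [a f_lt] := regular_card_bounded f Kreg ltLK.
have [l] := s_coinit (Some a) ltac:(by []).
move: (f_lt l) (s_neq0 l); rewrite /f; case: (s l) => [b|] // ltba _ /= leab.
case: leab => [ltab|[Eba]]; first exact: ord_irr (ord_trans ltab ltba).
by move: ltba; rewrite Eba => /ord_irr.
Qed.

End DualOrdinal.

Theorem theorem1p15 (X : topologicalType) (K : cardinal) :
  has_infinite_gauge X -> regular_card K -> in_MG X K ->
  let P1 := finally_compact X K in
  let P2 := exists G : loag, in_G_kappa G K /\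
              forall d : X -> X -> G, in_Met d -> Gcomplete d in
  let P3 := forall G : loag, in_G_kappa G K ->
              forall d : X -> X -> G, in_Met d -> Gcomplete d in
  let P4 := exists S : bls, in_F_kappa S K /\
              forall d : X -> X -> S, in_Ult d -> ucomplete d in
  let P5 := forall S : bls, in_F_kappa S K ->
              forall d : X -> X -> S, in_Ult d -> ucomplete d in
  (P1 <-> P2) /\ (P1 <-> P3) /\ (P1 <-> P4) /\ (P1 <-> P5).
Proof.
move=> _ Kreg [G0 [G0K [d0 d0_met]]] P1 P2 P3 P4 P5.
have [cl0 [cl0_level _]] := Gmetric_level Kreg G0K d0_met.
have P1E := finally_compact_iff_level_complete Kreg cl0_level.
have P13 : P1 -> P3.
  move=> /P1E all_complete G GK d d_met.
  by have [cl [cl_level]] := Gmetric_level Kreg GK d_met; apply; apply: all_complete.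
have P15 : P1 -> P5.
  move=> /P1E all_complete S SK d d_ult.
  by have [cl [cl_level]] := ultrametric_level SK d_ult; apply; apply: all_complete.
have P21 : P2 -> P1.
  move=> [G [GK G_complete]]; apply/P1E => cl cl_level.
  by have [d [d_met]] := level_Gmetric Kreg cl_level GK; apply; apply: G_complete.
have P41 : P4 -> P1.
  move=> [S [SK S_complete]]; apply/P1E => cl cl_level.
  by have [d [d_ult]] := level_ultrametric cl_level SK; apply; apply: S_complete.
have P32 : P3 -> P2 by move=> P3_; exists G0; split=> //; apply: P3_.
have P54 : P5 -> P4.
  by move=> P5_; exists (dual_bls K); split; [|apply: P5_]; apply: dual_bls_character.
by do !split; auto.
Qed.
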